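(* For any time warps $f,g$: (a) $\mathrm{last}(fg)=\omega$ if and only if ($\mathrm{last}(f)=\omega$ and $\mathrm{last}(g)=\omega$); (b) $\mathrm{last}(f)=\omega\iff\mathrm{last}(f^{r})=\omega\iff\mathrm{last}(f^{\ell})=\omega$.
   Context: Let $\overline{\omega}=\omega\cup\{\omega\}$ be the natural numbers with a top element $\omega$ adjoined, with its natural total order. A time warp is a monotone map $f\colon\overline{\omega}\to\overline{\omega}$ with $f(0)=0$ and $f(\omega)=\bigvee\{f(n)\mid n\in\omega\}$. The set $W$ of time warps is ordered pointwise, $fg:=f\circ g$, $\mathrm{id}$ is the identity. The residuals $\backslash,/$ are the binary operations on $W$ with $f\le h/g\iff fg\le h\iff g\le f\backslash h$ for all $f,g,h$. Define $f^{\ell}:=\mathrm{id}/f$ and $f^{r}:=f\backslash\mathrm{id}$. For a time warp $f$, $\mathrm{last}(f):=\bigwedge\{p\in\overline{\omega}\mid f(p)=f(\omega)\}$. *)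

From mathcomp Require Import all_boot.
From Stdlib Require Import Classical ClassicalEpsilon.

Set Implicit Arguments.
Unset Strict Implicit.
Unset Printing Implicit Defensive.

(* \overline{omega} = omega with a top element adjoined. *)
Inductive wbar : Type := Fin of nat | Om.

Definition wle (x y : wbar) : bool :=
  match x, y with
  | Fin m, Fin n => (m <= n)%N
  | _, Om => true
  | Om, Fin _ => false
  end.

Definition is_sup (s : nat -> wbar) (x : wbar) : Prop :=
  (forall n, wle (s n) x) /\ (forall u, (forall n, wle (s n) u) -> wle x u).

Definition is_inf (S : wbar -> Prop) (x : wbar) : Prop :=
  (forall p, S p -> wle x p) /\ (forall l, (forall p, S p -> wle l p) -> wle l x).

Record tw : Type := TW {
  twf :> wbar -> wbar;
  tw_mono : forall x y, wle x y -> wle (twf x) (twf y);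
  tw_zero : twf (Fin 0) = Fin 0;
  tw_om : is_sup (fun n => twf (Fin n)) (twf Om)
}.

Definition twle (f g : tw) : Prop := forall x, wle (f x) (g x).

Lemma wle_refl x : wle x x.
Proof. by case: x => //= n; exact: leqnn. Qed.

Lemma wle_trans x y z : wle x y -> wle y z -> wle x z.
Proof.
case: x => [m|]; case: y => [n|]; case: z => [k|] //=.
exact: leq_trans.
Qed.

Lemma id_mono x y : wle x y -> wle (id x) (id y).
Proof. by []. Qed.

Lemma id_om : is_sup (fun n => id (Fin n)) (id Om).
Proof.
split => // -[k|] Hu //=.
by have := Hu k.+1; rewrite /= ltnn.
Qed.

Definition tw_id : tw := @TW id id_mono erefl id_om.

Section Comp.
Variables f g : tw.

Lemma comp_mono x y : wle x y -> wle (f (g x)) (f (g y)).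
Proof. by move=> H; apply: tw_mono; apply: tw_mono. Qed.

Lemma comp_zero : f (g (Fin 0)) = Fin 0.
Proof. by rewrite !tw_zero. Qed.

Lemma comp_om : is_sup (fun n => f (g (Fin n))) (f (g Om)).
Proof.
have [gub gleast] := tw_om g.
have [fub fleast] := tw_om f.
split.
  by move=> n; apply: tw_mono; apply: gub.
move=> u Hu.
case Eg: (g Om) => [m|].
  have [n En] : exists n, g (Fin n) = Fin m.
    apply: NNPP => Hne.
    case: m Eg Hne => [|m] Eg Hne.
      by apply: Hne; exists 0; rewrite tw_zero.
    have : wle (g Om) (Fin m).
      apply: gleast => n; have := gub n; rewrite Eg.
      case E: (g (Fin n)) => [k|] //= Hk.
      rewrite -ltnS ltn_neqAle Hk andbT.
      by apply/negP => /eqP Ek; apply: Hne; exists n; rewrite E Ek.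
    by rewrite Eg /= ltnn.
  by rewrite -En; apply: Hu.
apply: fleast => k.
have [n Hn] : exists n, wle (Fin k) (g (Fin n)).
  apply: NNPP => Hne.
  case: k Hne => [|k] Hne.
    by apply: Hne; exists 0; rewrite tw_zero.
  have : wle (g Om) (Fin k).
    apply: gleast => n.
    case E: (g (Fin n)) => [j|] /=.
      rewrite leqNgt; apply/negP => Hj; apply: Hne; exists n; by rewrite E.
    by exfalso; apply: Hne; exists n; rewrite E.
  by rewrite Eg.
apply: wle_trans (Hu n).
exact: tw_mono.
Qed.

Definition tw_comp : tw := @TW (fun x => f (g x)) comp_mono comp_zero comp_om.
End Comp.

(* last(f) := inf { p | f p = f omega }  (the inf exists and is unique in the
   complete chain \overline{omega}; we pick it by classical choice) *)
Definition lastw (f : tw) : wbar :=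
  epsilon (inhabits Om) (fun p => is_inf (fun q => f q = f Om) p).

(* last(f) = omega exactly when f is finite on omega and f(omega) = omega; call such
   warps divergent.
   For the residuals, f^r is the largest h with fh <= id and f^l the largest h with
   hf <= id.  If f is divergent, its floor inverse n |-> max {y | f y <= n} and its
   ceiling inverse n |-> min {y | n <= f y} are such h with value omega at omega,
   so f^r(omega) = f^l(omega) = omega; finiteness of f^r and f^l on omega follows
   from f f^r <= id and f^l f <= id.  Conversely, if f(omega) = m is finite, the
   step warp jumping from 0 to omega at m+1 satisfies both inequalities, so f^r and
   f^l take the value omega at m+1. *)
From mathcomp Require Import all_boot boolp.
From Stdlib Require Import Classical ClassicalEpsilon.

Set Implicit Arguments.
Unset Strict Implicit.
Unset Printing Implicit Defensive.

Lemma wle_anti x y : wle x y -> wle y x -> x = y.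
Proof. by case: x => [m|]; case: y => [n|] //= le_mn le_nm; rewrite (@anti_leq m n) ?le_mn. Qed.

Lemma wle_Om x : wle x Om.
Proof. by case: x. Qed.

Lemma Om_wle x : wle Om x -> x = Om.
Proof. by case: x. Qed.

Lemma tw_le_Om (f : tw) x : wle (f x) (f Om).
Proof. exact/tw_mono/wle_Om. Qed.

Lemma twle_refl (f : tw) : twle f f.
Proof. by move=> x; exact: wle_refl. Qed.

Lemma exists_inf (S : wbar -> Prop) : exists L, is_inf S L.
Proof.
have [[n Sn] | noFin] := classic (exists n, S (Fin n)).
  have exS : exists n, `[< S (Fin n) >] by exists n; apply/asboolP.
  case: (ex_minnP exS) => m /asboolP Sm m_min.
  exists (Fin m); split=> [[k|] Sk //|L lbL]; last exact: lbL.
  by apply: m_min; apply/asboolP.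
exists Om; split=> [[k|] Sk //|L _]; last exact: wle_Om.
by case: noFin; exists k.
Qed.

Lemma inf_OmP (S : wbar -> Prop) L : is_inf S L -> L = Om <-> forall n, ~ S (Fin n).
Proof.
case=> L_lb L_glb; split=> [L_Om n Sn | noFin]; first by have := L_lb _ Sn; rewrite L_Om.
by apply: Om_wle; apply: L_glb => -[n /noFin|].
Qed.

Lemma tw_reaches (f : tw) k : wle (Fin k) (f Om) -> exists n, wle (Fin k) (f (Fin n)).
Proof.
case: k => [|k] le_kf; first by exists 0; rewrite tw_zero.
apply: NNPP => unreached.
have f_le_k : wle (f Om) (Fin k).
  apply: (proj2 (tw_om f)) => n; case fn: (f (Fin n)) => [j|].
    by rewrite /= leqNgt; apply/negP => lt_kj; apply: unreached; exists n; rewrite fn.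
  by case: unreached; exists n; rewrite fn.
by have := wle_trans le_kf f_le_k; rewrite /= ltnn.
Qed.

Lemma tw_attains (f : tw) m : f Om = Fin m -> exists n, f (Fin n) = Fin m.
Proof.
move=> fOm; have [|n le_mfn] := @tw_reaches f m; first by rewrite fOm; apply: wle_refl.
by exists n; rewrite -fOm; apply: wle_anti (tw_le_Om _ _) _; rewrite fOm.
Qed.

Lemma lastw_spec (f : tw) : is_inf (fun q => f q = f Om) (lastw f).
Proof. exact: epsilon_spec (exists_inf _). Qed.

Definition divergent (f : tw) := f Om = Om /\ forall n, f (Fin n) <> Om.

Lemma divergentE (f : tw) : divergent f <-> forall n, f (Fin n) <> f Om.
Proof.
split=> [[-> //] | never_top].
split=> [|n fn]; last first.
  by apply: (never_top n); rewrite fn; apply/esym/Om_wle; rewrite -{1}fn tw_le_Om.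
case fOm: (f Om) => [m|] //.
by have [n fn] := tw_attains fOm; case: (never_top n); rewrite fn fOm.
Qed.

Lemma lastw_Om (f : tw) : lastw f = Om <-> divergent f.
Proof. by rewrite (inf_OmP (lastw_spec f)) divergentE. Qed.

Lemma divergent_comp (f g : tw) : divergent (tw_comp f g) <-> divergent f /\ divergent g.
Proof.
split=> [[fgOm fg_fin] | [[fOm f_fin] [gOm g_fin]]]; last first.
  split=> [|n] /=; first by rewrite gOm.
  by case gn: (g (Fin n)) => [k|]; [exact: f_fin | case: (g_fin n)].
rewrite /= in fgOm fg_fin.
have fOm : f Om = Om by apply: Om_wle; rewrite -{1}fgOm tw_le_Om.
have g_fin n : g (Fin n) <> Om by move=> gn; apply: (fg_fin n); rewrite gn.
have gOm : g Om = Om.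
  case gOm: (g Om) => [m|] //.
  by have [n gn] := tw_attains gOm; case: (fg_fin n); rewrite gn -gOm.
split; split=> // n fn.
have [j le_ngj] : exists j, wle (Fin n) (g (Fin j)) by apply: tw_reaches; rewrite gOm.
by apply: (fg_fin j); apply: Om_wle; rewrite -fn; apply: tw_mono.
Qed.

Section TwOfNat.
Variable g : nat -> nat.
Hypothesis g_mono : {homo g : m n / m <= n}.
Hypothesis g0 : g 0 = 0.
Hypothesis g_unbounded : forall k, exists n, k <= g n.

Definition lift_nat (x : wbar) : wbar := if x is Fin n then Fin (g n) else Om.

Lemma lift_nat_mono x y : wle x y -> wle (lift_nat x) (lift_nat y).
Proof. by case: x => [m|]; case: y => [n|] //=; apply: g_mono. Qed.

Lemma lift_nat_zero : lift_nat (Fin 0) = Fin 0.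
Proof. by rewrite /= g0. Qed.

Lemma lift_nat_om : is_sup (fun n => lift_nat (Fin n)) (lift_nat Om).
Proof.
split=> // -[j|] ub //=.
by have [n lt_j_gn] := g_unbounded j.+1; have := ub n; rewrite /= leqNgt lt_j_gn.
Qed.

Definition tw_of_nat : tw := TW lift_nat_mono lift_nat_zero lift_nat_om.

End TwOfNat.

Definition step (m : nat) (x : wbar) : wbar := if wle (Fin m.+1) x then Om else Fin 0.

Lemma step_mono m x y : wle x y -> wle (step m x) (step m y).
Proof.
rewrite /step => le_xy; case: ifP => [le_mx|_]; last by case: ifP.
by rewrite (wle_trans le_mx le_xy).
Qed.

Lemma step_om m : is_sup (fun n => step m (Fin n)) (step m Om).
Proof.
split=> [n|u ub]; first exact: wle_Om.
by have := ub m.+1; rewrite /step /= leqnn.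
Qed.

Definition step_tw m : tw := TW (@step_mono m) erefl (step_om m).

Lemma step_le_not_divergent m (r : tw) : twle (step_tw m) r -> ~ divergent r.
Proof.
move=> step_le_r [_ r_fin]; apply: (r_fin m.+1); apply: Om_wle.
by have := step_le_r (Fin m.+1); rewrite /= /step /= leqnn.
Qed.

Section StepWarp.
Variables (f : tw) (m : nat).
Hypothesis fOm : f Om = Fin m.

Lemma comp_step_le_id : twle (tw_comp f (step_tw m)) tw_id.
Proof.
move=> x; rewrite /= /step; case: ifP => [le_mx|_]; last by rewrite tw_zero; case: x.
by apply: wle_trans (tw_le_Om f _) (wle_trans _ le_mx); rewrite fOm /= leqnSn.
Qed.

Lemma step_comp_le_id : twle (tw_comp (step_tw m) f) tw_id.
Proof.
move=> x; rewrite /= /step; case: ifP => [le_mfx|_]; last by case: x.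
by have := wle_trans le_mfx (tw_le_Om f x); rewrite fOm /= ltnn.
Qed.

End StepWarp.

Section DivergentInverses.
Variable f : tw.
Hypothesis f_div : divergent f.

(* the default 0 is never used, f being finite on omega *)
Definition fval n := if f (Fin n) is Fin j then j else 0.

Lemma fvalE n : f (Fin n) = Fin (fval n).
Proof. by rewrite /fval; case fn: (f (Fin n)) => //; case: (f_div.2 n). Qed.

Lemma fval_mono : {homo fval : m n / m <= n}.
Proof. by move=> m n le_mn; have := @tw_mono f (Fin m) (Fin n) le_mn; rewrite !fvalE. Qed.

Definition floor_inv n := \max_(0 <= y < n.+1 | fval y <= n) y.

Definition ceil_inv n := \max_(0 <= y < n.+1 | fval y < n) y.+1.

Lemma floor_inv_mono : {homo floor_inv : m n / m <= n}.
Proof.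
move=> m n le_mn; apply/bigmax_leqP_seq => y; rewrite mem_index_iota => lt_ym le_fy_m.
apply: leq_bigmax_seq; last exact: leq_trans le_mn.
by rewrite mem_index_iota (leq_trans lt_ym).
Qed.

Lemma ceil_inv_mono : {homo ceil_inv : m n / m <= n}.
Proof.
move=> m n le_mn; apply/bigmax_leqP_seq => y; rewrite mem_index_iota => lt_ym lt_fy_m.
apply: (leq_bigmax_seq (F := succn)); last exact: leq_trans le_mn.
by rewrite mem_index_iota (leq_trans lt_ym).
Qed.

Lemma floor_inv0 : floor_inv 0 = 0.
Proof. by apply/eqP; rewrite -leqn0; apply/bigmax_leqP_seq => y; rewrite mem_index_iota. Qed.

Lemma ceil_inv0 : ceil_inv 0 = 0.
Proof. by apply/eqP; rewrite -leqn0; apply/bigmax_leqP_seq. Qed.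

Lemma floor_inv_unbounded k : exists n, k <= floor_inv n.
Proof.
exists (maxn k (fval k)); apply: (leq_bigmax_seq k); last exact: leq_maxr.
by rewrite mem_index_iota ltnS leq_maxl.
Qed.

Lemma ceil_inv_unbounded k : exists n, k <= ceil_inv n.
Proof.
exists (maxn k (fval k)).+1; apply: leq_trans (leqnSn k) _.
apply: (leq_bigmax_seq (F := succn) k); last by rewrite ltnS leq_maxr.
by rewrite mem_index_iota ltnS leqW ?leq_maxl.
Qed.

Definition floor_inv_tw := tw_of_nat floor_inv_mono floor_inv0 floor_inv_unbounded.

Definition ceil_inv_tw := tw_of_nat ceil_inv_mono ceil_inv0 ceil_inv_unbounded.

Lemma comp_floor_inv_le_id : twle (tw_comp f floor_inv_tw) tw_id.
Proof.
case=> [n|] /=; last exact: wle_Om.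
rewrite fvalE /floor_inv; elim/big_ind: _ => //; first by rewrite -fvalE tw_zero.
by move=> a b; rewrite /maxn; case: ifP.
Qed.

Lemma ceil_inv_comp_le_id : twle (tw_comp ceil_inv_tw f) tw_id.
Proof.
case=> [n|] /=; last by rewrite f_div.1.
rewrite fvalE /=; apply/bigmax_leqP_seq => y _ lt_fy_fn.
by rewrite ltnNge; apply: contraTN lt_fy_fn => le_ny; rewrite -leqNgt fval_mono.
Qed.

End DivergentInverses.

Lemma divergent_right_residual (f r : tw) :
  twle (tw_comp f r) tw_id -> (forall h, twle (tw_comp f h) tw_id -> twle h r) ->
  divergent f <-> divergent r.
Proof.
move=> fr_le r_max; split=> [f_div | r_div].
  split=> [|n rn]; first exact/Om_wle/(r_max _ (comp_floor_inv_le_id f_div) Om).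
  by have := fr_le (Fin n); rewrite /= rn f_div.1.
case fOm: (f Om) => [m|]; first by case: (step_le_not_divergent (r_max _ (comp_step_le_id fOm))).
split=> // n fn.
have [j le_nrj] : exists j, wle (Fin n) (r (Fin j)) by apply: tw_reaches; rewrite r_div.1.
by have := wle_trans (tw_mono f le_nrj) (fr_le (Fin j)); rewrite fn.
Qed.

Lemma divergent_left_residual (f l : tw) :
  twle (tw_comp l f) tw_id -> (forall h, twle (tw_comp h f) tw_id -> twle h l) ->
  divergent f <-> divergent l.
Proof.
move=> lf_le l_max; split=> [f_div | l_div].
  split=> [|n ln]; first exact/Om_wle/(l_max _ (ceil_inv_comp_le_id f_div) Om).
  have [j le_nfj] : exists j, wle (Fin n) (f (Fin j)) by apply: tw_reaches; rewrite f_div.1.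
  by have := wle_trans (tw_mono l le_nfj) (lf_le (Fin j)); rewrite ln.
case fOm: (f Om) => [m|]; first by case: (step_le_not_divergent (l_max _ (step_comp_le_id fOm))).
split=> // n fn.
by have := lf_le (Fin n); rewrite /= fn l_div.1.
Qed.

Theorem lemma2p11
  (ldiv rdiv : tw -> tw -> tw)
  (Hres : forall f g h : tw,
      (twle f (rdiv h g) <-> twle (tw_comp f g) h) /\
      (twle (tw_comp f g) h <-> twle g (ldiv f h)))
  (f g : tw) :
  (lastw (tw_comp f g) = Om <-> (lastw f = Om /\ lastw g = Om)) /\
  ((lastw f = Om <-> lastw (ldiv f tw_id) = Om) /\
   (lastw (ldiv f tw_id) = Om <-> lastw (rdiv tw_id f) = Om)).
Proof.
rewrite !lastw_Om divergent_comp; split=> //.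
have div_r : divergent f <-> divergent (ldiv f tw_id).
  apply: divergent_right_residual => [|h]; last by move/(proj2 (Hres f h tw_id)).
  exact/(proj2 (Hres f _ tw_id))/twle_refl.
have div_l : divergent f <-> divergent (rdiv tw_id f).
  apply: divergent_left_residual => [|h]; last by move/(proj1 (Hres h f tw_id)).
  exact/(proj1 (Hres _ f tw_id))/twle_refl.
by rewrite -div_r -div_l.
Qed.
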